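(* Let $p,m,n\ge 1$ be integers, let $a_1,\dots,a_n\in\mathbb{C}$ be distinct, let $m_1,\dots,m_n\ge 1$ be integers, and let $C_0,\dots,C_{m-1}$ and $B_k^{(j)}$ ($1\le j\le n$, $1\le k\le m_j$) be complex $p\times p$ matrices. Consider the $p\times p$ rational matrix $$R(\lambda)=I\lambda^m-C_{m-1}\lambda^{m-1}-\cdots-C_1\lambda-C_0+\sum_{j=1}^{n}\sum_{k=1}^{m_j}\frac{B_k^{(j)}}{(\lambda-a_j)^k},$$ and let $\mathcal{C}_R$ be its associated block matrix (defined in the context). Then every eigenvalue of $R(\lambda)$ is an eigenvalue of $\mathcal{C}_R$.
   Context: A scalar $\lambda_0\in\mathbb{C}$ with $\lambda_0\notin\{a_1,\dots,a_n\}$ is an eigenvalue of $R(\lambda)$ if there is a nonzero $v\in\mathbb{C}^p$ with $R(\lambda_0)v=0$. Let $N=m+\sum_{j=1}^n \frac{m_j(m_j+1)}{2}$. The associated block matrix is the $pN\times pN$ matrix $$\mathcal{C}_R=\begin{bmatrix}\mathcal{A}_n&0&\cdots&0&-\mathcal{F}_n\\ 0&\mathcal{A}_{n-1}&\cdots&0&-\mathcal{F}_{n-1}\\ \vdots&&\ddots&&\vdots\\ 0&0&\cdots&\mathcal{A}_1&-\mathcal{F}_1\\ \mathcal{B}_n&\mathcal{B}_{n-1}&\cdots&\mathcal{B}_1&\mathcal{B}_0\end{bmatrix},$$ where, for $1\le j\le n$: $\mathcal{A}_j=\mathrm{diag}(\mathbf{A}^{(j)}_{m_j},\mathbf{A}^{(j)}_{m_j-1},\dots,\mathbf{A}^{(j)}_1)$,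 and $\mathbf{A}^{(j)}_k$ ($1\le k\le m_j$) is the $pk\times pk$ block matrix with $a_jI$ in each diagonal block, $I$ in each block of the block superdiagonal, and $0$ elsewhere; $\mathcal{F}_j$ is the block column $\begin{bmatrix}\mathbf{F}_{m_j}\\ \vdots\\ \mathbf{F}_1\end{bmatrix}$, where $\mathbf{F}_k$ is the $pk\times pm$ matrix, partitioned into $p\times p$ blocks, whose only nonzero block is $I$ in block position $(k,1)$ (last block row, first block column); $\mathcal{B}_j=\begin{bmatrix}\mathbf{B}^{(j)}_{m_j}&\mathbf{B}^{(j)}_{m_j-1}&\cdots&\mathbf{B}^{(j)}_1\end{bmatrix}$, where $\mathbf{B}^{(j)}_k$ is the $pm\times pk$ matrix, partitioned into $p\times p$ blocks, whose only nonzero block is $B^{(j)}_k$ in block position $(m,1)$; and $\mathcal{B}_0$ is the $pm\times pm$ block companion matrix with $I$ in each block of the block superdiagonal, last block row $\begin{bmatrix}C_0&C_1&\cdots&C_{m-1}\end{bmatrix}$, and $0$ elsewhere. *)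

(* Complex numbers are modelled as R[i] = complex R for an
   arbitrary R : realType (so C = R[i] with R the real numbers is the case of
   the paper). *)
From HB Require Import structures.
From mathcomp Require Import all_boot all_algebra.
From mathcomp Require Import complex reals.
Set Implicit Arguments. Unset Strict Implicit. Unset Printing Implicit Defensive.
Import GRing.Theory.
Local Open Scope ring_scope.

Section Defs.
Variable R : realType.
Local Notation C := (R[i]).

(* Data: paper index j (1 <= j <= n) is represented by j : 'I_n (j = paper j - 1).
   a j     : the pole a_{j+1}
   mj j    : the multiplicity m_{j+1}
   B j k   : the matrix B_k^{(j+1)}  (meaningful for 1 <= k <= mj j)
   Cc s    : the matrix C_s, s < m. *)

Definition Rmat (p m n : nat) (Cc : 'I_m -> 'M[C]_p) (a : 'I_n -> C)
  (mj : 'I_n -> nat) (B : 'I_n -> nat -> 'M[C]_p) (lam : C) : 'M[C]_p :=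
  lam ^+ m *: 1%:M - \sum_(s < m) lam ^+ s *: Cc s
  + \sum_(j < n) \sum_(1 <= k < (mj j).+1) (lam - a j) ^- k *: B j k.

Definition rat_eigenvalue (p m n : nat) (Cc : 'I_m -> 'M[C]_p) (a : 'I_n -> C)
  (mj : 'I_n -> nat) (B : 'I_n -> nat -> 'M[C]_p) (lam0 : C) : Prop :=
  (forall j, lam0 != a j) /\
  exists v : 'cV[C]_p, v != 0 /\ Rmat Cc a mj B lam0 *m v = 0.

(* The A-part lists, for j = n, n-1, ..., 1 and, inside, k = m_j, ..., 1,
   the k block rows of A^{(j)}_k: a triple (j, k, t) with 0 <= t < k stands
   for block row/column t+1 of A^{(j)}_k. *)
Definition Apart (n : nat) (mj : 'I_n -> nat) : seq ('I_n * nat * nat) :=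
  flatten [seq flatten [seq [seq (j, k, t) | t <- iota 0 k]
                        | k <- rev (iota 1 (mj j))]
          | j <- rev (enum 'I_n)].

Definition Nsize (m n : nat) (mj : 'I_n -> nat) : nat :=
  (m + \sum_(j < n) (mj j * (mj j).+1) %/ 2)%N.

Definition mxe (p : nat) (M : 'M[C]_p) (i i' : nat) : C :=
  match @insub _ (fun x => x < p)%N 'I_p i, @insub _ (fun x => x < p)%N 'I_p i' with
  | Some x, Some y => M x y
  | _, _ => 0
  end.

Definition idE (i i' : nat) : C := (i == i')%:R.

(* Scalar entry (i, i') (0 <= i, i' < p) of the p x p block in block position
   (r, c) of C_R; here r, c are block indices, 0 <= r, c < N.  Block indices
   r < size (Apart mj) are described by the triple nth of Apart; the others
   belong to the last m block rows/columns (the F_j / B_j / B_0 part),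
   indexed by s = r - size (Apart mj), 0 <= s < m. *)
Definition CRblock (p m n : nat) (Cc : 'I_m -> 'M[C]_p) (a : 'I_n -> C)
  (mj : 'I_n -> nat) (B : 'I_n -> nat -> 'M[C]_p)
  (r c i i' : nat) : C :=
  let L := Apart mj in
  let SA := size L in
  let desc x := nth None (map Some L) x in
  match desc r, desc c with
  | Some (j, k, t), Some (j', k', t') =>
      (* block diagonal part diag(A_n, ..., A_1);
         A^{(j)}_k: a_j I on the diagonal, I on the superdiagonal *)
      if (j == j') && (k == k') then
        if t' == t then a j * idE i i'
        else if t' == t.+1 then idE i i' else 0
      else 0
  | Some (j, k, t), None =>
      (* last block column: -F_j ; F_k has I in block (k, 1) *)
      let s := (c - SA)%N in
      if (t == k.-1) && (s == 0%N) then - idE i i' else 0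
  | None, Some (j, k, t) =>
      (* last block row: B_j ; B^{(j)}_k has B_k^{(j)} in block (m, 1) *)
      let s := (r - SA)%N in
      if (s == m.-1) && (t == 0%N) then mxe (B j k) i i' else 0
  | None, None =>
      (* B_0: block companion matrix, last block row [C_0 ... C_{m-1}] *)
      let s := (r - SA)%N in
      let s' := (c - SA)%N in
      if s == m.-1 then
        (if @insub _ (fun x => x < m)%N 'I_m s' is Some y then mxe (Cc y) i i' else 0)
      else if s' == s.+1 then idE i i' else 0
  end.

Definition CR (p m n : nat) (Cc : 'I_m -> 'M[C]_p) (a : 'I_n -> C)
  (mj : 'I_n -> nat) (B : 'I_n -> nat -> 'M[C]_p) : 'M[C]_(p * Nsize m mj) :=
  \matrix_(r, c) CRblock Cc a mj B (r %/ p) (c %/ p) (r %% p) (c %% p).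
End Defs.

From HB Require Import structures.
From mathcomp Require Import all_boot all_algebra.
From mathcomp Require Import complex reals.
From mathcomp Require Import ring zify.
Set Implicit Arguments. Unset Strict Implicit. Unset Printing Implicit Defensive.
Import GRing.Theory.
Local Open Scope ring_scope.

(* If R(lam) v = 0 with v <> 0, put -(lam - a_j)^-(k - t) v in the block of row t + 1
   of A^{(j)}_k and lam^s v in the (s + 1)-th of the last m blocks.  This is an
   eigenvector of C_R for lam: in the rows of A^{(j)}_k, multiplying by lam - a_j
   lowers the exponent by one, and the last such row gets -v from -F_j; the first
   m - 1 companion rows shift the powers of lam; and the last block row reads
   lam^m v = sum_s lam^s C_s v - sum_{j,k} (lam - a_j)^-k B_k^{(j)} v, which is
   R(lam) v = 0. *)

Lemma eigenvalue_col (F : fieldType) n (A : 'M[F]_n) a (x : 'cV_n) :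
  A *m x = a *: x -> x != 0 -> eigenvalue A a.
Proof.
move=> Ax x_neq0; rewrite /eigenvalue /eigenspace kermx_eq0 row_free_unit.
apply: contra x_neq0 => unit_Aa; apply/eqP.
have : (A - a%:M) *m x = 0 by rewrite mulmxBl Ax mul_scalar_mx subrr.
by move/(congr1 (mulmx (invmx (A - a%:M)))); rewrite mulKmx // mulmx0.
Qed.

Section BlockColumns.
Variables (K : pzRingType) (p : nat).
Hypothesis p_gt0 : (0 < p)%N.

Definition ordmod (r : nat) : 'I_p := Ordinal (ltn_pmod r p_gt0).

Definition blockcol N (x : nat -> 'cV[K]_p) : 'cV[K]_(p * N) :=
  \col_r x (r %/ p)%N (ordmod r) 0.

Lemma ordmodMDl b (i : 'I_p) : ordmod (b * p + i) = i.
Proof. by apply: val_inj; rewrite /= modnMDl modn_small. Qed.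

Lemma divnMDl_ord b (i : 'I_p) : ((b * p + i) %/ p)%N = b.
Proof. by rewrite divnMDl // divn_small ?addn0. Qed.

Lemma sum_blocks N (F : nat -> 'I_p -> K) :
  \sum_(c < p * N) F (c %/ p)%N (ordmod c) = \sum_(b < N) \sum_(i < p) F b i.
Proof.
rewrite -(big_mkord xpredT (fun c => F (c %/ p)%N (ordmod c))) mulnC big_nat_mul.
rewrite big_mkord; apply: eq_bigr => b _.
rewrite -{1}[(b * p)%N]add0n big_addn mulSn addnK big_mkord.
by apply: eq_bigr => i _; rewrite addnC divnMDl_ord ordmodMDl.
Qed.

Lemma mul_blockmx_blockcol N (blk : nat -> nat -> 'M[K]_p) (x : nat -> 'cV[K]_p) :
  (\matrix_(r, c) blk (r %/ p)%N (c %/ p)%N (ordmod r) (ordmod c) : 'M_(p * N))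
    *m blockcol N x = blockcol N (fun b => \sum_(c < N) blk b c *m x c).
Proof.
apply/matrixP => r j; rewrite ord1 !mxE summxE.
under eq_bigr do rewrite !mxE.
rewrite (@sum_blocks _ (fun c i => blk (r %/ p)%N c (ordmod r) i * x c i 0)).
by apply: eq_bigr => c _; rewrite mxE.
Qed.

Lemma blockcolZ N c (x : nat -> 'cV[K]_p) :
  c *: blockcol N x = blockcol N (fun b => c *: x b).
Proof. by apply/matrixP => r j; rewrite !mxE. Qed.

Lemma eq_blockcol N (x y : nat -> 'cV[K]_p) :
  (forall b, (b < N)%N -> x b = y b) -> blockcol N x = blockcol N y.
Proof.
move=> xy; apply/matrixP => r j; rewrite !mxE xy //.
by rewrite ltn_divLR // [(N * p)%N]mulnC.
Qed.

Lemma blockcol_eq0 N (x : nat -> 'cV[K]_p) b :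
  (b < N)%N -> blockcol N x = 0 -> x b = 0.
Proof.
move=> b_lt /matrixP x0; apply/matrixP => i j; rewrite ord1 mxE.
have r_lt : (b * p + i < p * N)%N.
  by have := ltn_ord i; nia.
by have := x0 (Ordinal r_lt) 0; rewrite !mxE /= divnMDl_ord ordmodMDl.
Qed.

End BlockColumns.

Lemma big_nat_only1 (V : nmodType) lo hi u (F : nat -> V) :
  (lo <= u < hi)%N -> (forall t, t != u -> F t = 0) -> \sum_(lo <= t < hi) F t = F u.
Proof.
move=> u_in F0; rewrite (bigD1_seq u) ?mem_index_iota ?iota_uniq //=.
by rewrite big1 ?addr0.
Qed.

Section Apart.
Variables (n : nat) (mj : 'I_n -> nat).

Lemma sum_Apart (V : nmodType) (F : 'I_n * nat * nat -> V) :
  \sum_(q <- Apart mj) F q =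
  \sum_(j < n) \sum_(1 <= k < (mj j).+1) \sum_(0 <= t < k) F (j, k, t).
Proof.
rewrite /Apart big_flatten big_map big_rev big_enum /=; apply: eq_bigr => j _.
rewrite big_flatten big_map big_rev /index_iota subSS subn0; apply: eq_bigr => k _.
by rewrite big_map subn0.
Qed.

Lemma sum_Apart_block (V : nmodType) j0 k0 (F : 'I_n * nat * nat -> V) :
  (1 <= k0 <= mj j0)%N -> (forall q, q.1 != (j0, k0) -> F q = 0) ->
  \sum_(q <- Apart mj) F q = \sum_(0 <= t < k0) F (j0, k0, t).
Proof.
move=> k0_in F0; rewrite sum_Apart (bigD1 j0) //=.
rewrite [X in _ + X]big1 ?addr0 => [|j j_neq]; last first.
  rewrite big1 // => k _; rewrite big1 // => t _.
  by apply: F0; rewrite xpair_eqE (negbTE j_neq).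
rewrite (big_nat_only1 (u := k0)) ?ltnS // => k k_neq; rewrite big1 // => t _.
by apply: F0; rewrite xpair_eqE eqxx.
Qed.

Lemma mem_Apart j k t : (j, k, t) \in Apart mj -> (1 <= k <= mj j)%N && (t < k)%N.
Proof.
case/flattenP=> s /mapP[j' _ ->] /flattenP[s' /mapP[k' hk ->]] /mapP[t' ht [-> -> ->]].
by move: hk ht; rewrite mem_rev !mem_iota /=; lia.
Qed.

Lemma size_Apart : size (Apart mj) = (\sum_(j < n) (mj j * (mj j).+1) %/ 2)%N.
Proof.
rewrite /Apart size_flatten sumnE !big_map big_rev big_enum /=; apply: eq_bigr => j _.
rewrite size_flatten sumnE !big_map big_rev.
under eq_bigr do rewrite size_map size_iota.
have -> : (\sum_(i <- iota 1 (mj j)) i = \sum_(0 <= i < (mj j).+1) i)%N.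
  by rewrite big_ltn // add0n /index_iota subn1.
by rewrite bin2_sum bin2 divn2 mulnC.
Qed.

End Apart.

Section BlockStructure.
Variables (R : realType) (p m n : nat) (Cc : 'I_m -> 'M[R[i]]_p) (a : 'I_n -> R[i])
  (mj : 'I_n -> nat) (B : 'I_n -> nat -> 'M[R[i]]_p).
Local Notation C := R[i].
Local Notation SA := (size (Apart mj)).
Local Notation N := (Nsize m mj).
(* A block index of C_R is either [inl (j, k, t)], block row [t + 1] of A^{(j)}_k,
   or [inr s], block row [s + 1] of the last m. *)
Local Notation pos := ('I_n * nat * nat + nat)%type.

Definition block_pos (b : nat) : pos :=
  if nth None (map Some (Apart mj)) b is Some q then inl q else inr (b - SA)%N.

Definition CRblk (x y : pos) : 'M[C]_p :=
  match x, y with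
  | inl (j, k, t), inl q =>
      (if q.1 == (j, k) then
         if q.2 == t then a j else if q.2 == t.+1 then 1 else 0
       else 0)%:M
  | inl (_, k, t), inr s => if s == 0%N then (if t == k.-1 then -1 else 0)%:M else 0
  | inr s, inl (j, k, t) => if s == m.-1 then (if t == 0%N then B j k else 0) else 0
  | inr s, inr s' =>
      if s == m.-1 then
        (if @insub _ (fun x => x < m)%N 'I_m s' is Some y then Cc y else 0)
      else if s' == s.+1 then 1%:M else 0
  end.

Lemma mxe_ord (M : 'M[C]_p) (i i' : 'I_p) : mxe M i i' = M i i'.
Proof. by rewrite /mxe !valK. Qed.

Lemma CRblockE r c (i i' : 'I_p) :
  CRblock Cc a mj B r c i i' = CRblk (block_pos r) (block_pos c) i i'.
Proof.
rewrite /CRblock /block_pos /idE.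
case: (nth None _ r) => [[[j k] t]|]; case: (nth None _ c) => [[[j' k'] t']|] /=.
- rewrite xpair_eqE (eq_sym j') (eq_sym k').
  by repeat case: ifP => _; rewrite ?mxE ?mulr_natr ?mul0rn.
- by case: (_ == 0%N); case: (t == _); rewrite /= ?mxE ?mulNrn ?mul0rn.
- by case: (_ == m.-1); case: (t' == _); rewrite /= ?mxe_ord ?mxE.
- case: ifP => _; first by case: insub => [y|]; rewrite ?mxe_ord ?mxE.
  by repeat case: ifP => _; rewrite ?mxE.
Qed.

Lemma Nsize_eq : Nsize m mj = (SA + m)%N.
Proof. by rewrite /Nsize size_Apart addnC. Qed.

Lemma nth_Some_Apart b :
  (b < SA)%N -> exists2 q, nth None (map Some (Apart mj)) b = Some q & q \in Apart mj.
Proof.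
move=> b_lt; have := mem_nth None (_ : b < size (map Some (Apart mj)))%N.
rewrite size_map => /(_ b_lt); case: nth => [q|/mapP[] //].
by rewrite mem_map //; [exists q | exact: Some_inj].
Qed.

Lemma block_pos_ge b : (SA <= b)%N -> block_pos b = inr (b - SA)%N.
Proof. by move=> b_ge; rewrite /block_pos nth_default ?size_map. Qed.

Lemma block_posP b : (b < N)%N ->
  match block_pos b with inl q => q \in Apart mj | inr s => (s < m)%N end.
Proof.
rewrite Nsize_eq => b_lt; have [b_ltSA|b_geSA] := ltnP b SA.
  by have [q] := nth_Some_Apart b_ltSA; rewrite /block_pos => ->.
by rewrite block_pos_ge //; lia.
Qed.

Lemma sum_block_pos (V : nmodType) (G : pos -> V) :
  \sum_(b < N) G (block_pos b) =
  \sum_(q <- Apart mj) G (inl q) + \sum_(0 <= s < m) G (inr s).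
Proof.
rewrite -(big_mkord xpredT (fun b => G (block_pos b))) Nsize_eq.
rewrite (big_cat_nat _ (leq_addr m SA)) //=; congr (_ + _).
  rewrite -(big_map Some xpredT (fun o => if o is Some q then G (inl q) else 0)).
  rewrite (big_nth None) size_map; apply: eq_big_nat => b /andP[_ b_lt].
  by have [q] := nth_Some_Apart b_lt; rewrite /block_pos => ->.
rewrite -{1}[SA]add0n big_addn addKn; apply: eq_big_nat => s _.
by rewrite block_pos_ge ?leq_addl // addnK.
Qed.

Lemma CR_blockmx (p_gt0 : (0 < p)%N) :
  CR Cc a mj B = \matrix_(r, c)
    CRblk (block_pos (r %/ p)) (block_pos (c %/ p)) (ordmod p_gt0 r) (ordmod p_gt0 c).
Proof.
apply/matrixP => r c; rewrite !mxE.
exact: (CRblockE _ _ (ordmod p_gt0 r) (ordmod p_gt0 c)).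
Qed.

Section Eigenvector.
Variables (lam : C) (v : 'cV[C]_p).

Definition eigcoef (x : pos) : C :=
  match x with inl (j, k, t) => - (lam - a j) ^- (k - t) | inr s => lam ^+ s end.

Local Notation row_sum x :=
  (\sum_(q <- Apart mj) CRblk x (inl q) *m (eigcoef (inl q) *: v)
   + \sum_(0 <= s < m) CRblk x (inr s) *m (eigcoef (inr s) *: v)).

Lemma eigcoef_shift j k t : lam != a j -> (t < k)%N ->
  (lam - a j) * eigcoef (inl (j, k, t)) =
  if (t.+1 < k)%N then eigcoef (inl (j, k, t.+1)) else -1.
Proof.
move=> lam_neq t_lt /=; have d_neq0 : lam - a j != 0 by rewrite subr_eq0.
case: ltnP => [t1_lt|t1_ge].
  have -> : (k - t = (k - t.+1).+1)%N by lia.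
  by rewrite mulrN exprS invfM mulrA divff // mul1r.
have -> : (k - t = 1)%N by lia.
by rewrite expr1 mulrN divff.
Qed.

Lemma CRblk_AA j k t t' :
  CRblk (inl (j, k, t)) (inl (j, k, t')) =
  (if t' == t then a j else if t' == t.+1 then 1 else 0)%:M.
Proof. by rewrite /= eqxx. Qed.

Lemma CR_row_A j k t : lam != a j -> (1 <= k <= mj j)%N -> (t < k)%N -> (0 < m)%N ->
  row_sum (inl (j, k, t)) = lam *: (eigcoef (inl (j, k, t)) *: v).
Proof.
move=> lam_neq k_in t_lt m_gt0.
have -> : \sum_(q <- Apart mj) CRblk (inl (j, k, t)) (inl q) *m (eigcoef (inl q) *: v)
    = (a j * eigcoef (inl (j, k, t))
       + (if (t.+1 < k)%N then eigcoef (inl (j, k, t.+1)) else 0)) *: v.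
  rewrite (sum_Apart_block (j0 := j) (k0 := k)) // => [|[[j' k'] t'] /= /negbTE->];
    last first.
    by rewrite mul_scalar_mx scale0r.
  under eq_bigr do rewrite CRblk_AA mul_scalar_mx scalerA.
  rewrite -scaler_suml; congr (_ *: _).
  have split_coef t' :
      (if t' == t then a j else if t' == t.+1 then 1 else 0) * eigcoef (inl (j, k, t'))
      = (if t' == t then a j * eigcoef (inl (j, k, t')) else 0)
        + (if t' == t.+1 then eigcoef (inl (j, k, t')) else 0).
    have [->|_] := eqVneq t' t; first by rewrite (ltn_eqF (ltnSn t)) addr0.
    by case: eqP => _; rewrite ?mul1r ?mul0r add0r.
  under eq_bigr do rewrite split_coef.
  by rewrite big_split -!big_mkcond !big_nat1_eq /= t_lt.
have -> : \sum_(0 <= s < m) CRblk (inl (j, k, t)) (inr s) *m (eigcoef (inr s) *: v)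
    = (if t == k.-1 then -1 else 0) *: v.
  rewrite (big_nat_only1 (u := 0%N)) //= => [|s /negbTE-> /=]; last by rewrite mul0mx.
  by rewrite expr0 scale1r mul_scalar_mx.
rewrite scalerA -scalerDl; congr (_ *: _).
have := eigcoef_shift lam_neq t_lt; case: ltnP => [t1_lt|t1_ge] shift.
  by rewrite (_ : (t == k.-1) = false) ?addr0 -?shift; [ring | apply/negbTE; lia].
by rewrite (_ : (t == k.-1) = true) ?addr0 -?shift; [ring | apply/eqP; lia].
Qed.

Lemma CR_row_shift s : (s.+1 < m)%N ->
  row_sum (inr s) = lam *: (eigcoef (inr s) *: v).
Proof.
move=> s1_lt; have /negbTE s_neq : s != m.-1 by lia.
rewrite big1_seq => [|[[j k] t] _]; last by rewrite /= s_neq mul0mx.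
rewrite add0r (big_nat_only1 (u := s.+1)) //= => [|s' /negbTE s'_neq]; last first.
  by rewrite /= s_neq s'_neq mul0mx.
by rewrite s_neq eqxx mul1mx scalerA exprS.
Qed.

Lemma Rmat_mulmx :
  Rmat Cc a mj B lam *m v = lam ^+ m *: v - \sum_(s < m) lam ^+ s *: (Cc s *m v)
    + \sum_(j < n) \sum_(1 <= k < (mj j).+1) (lam - a j) ^- k *: (B j k *m v).
Proof.
rewrite /Rmat mulmxDl mulmxBl -scalemxAl mul1mx !mulmx_suml.
congr (_ - _ + _); first by apply: eq_bigr => s _; rewrite -scalemxAl.
by apply: eq_bigr => j _; rewrite mulmx_suml; apply: eq_bigr => k _; rewrite -scalemxAl.
Qed.

Lemma CR_row_last : (0 < m)%N -> Rmat Cc a mj B lam *m v = 0 ->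
  row_sum (inr m.-1) = lam *: (eigcoef (inr m.-1) *: v).
Proof.
move=> m_gt0; rewrite Rmat_mulmx => Rv.
have -> : \sum_(q <- Apart mj) CRblk (inr m.-1) (inl q) *m (eigcoef (inl q) *: v)
    = - \sum_(j < n) \sum_(1 <= k < (mj j).+1) (lam - a j) ^- k *: (B j k *m v).
  rewrite sum_Apart -sumrN; apply: eq_bigr => j _; rewrite -sumrN.
  apply: eq_big_nat => k /andP[k_gt0 _].
  rewrite (big_nat_only1 (u := 0%N)) //= => [|t /negbTE t_neq]; last first.
    by rewrite /= eqxx t_neq mul0mx.
  by rewrite eqxx subn0 -scalemxAr scaleNr.
have -> : \sum_(0 <= s < m) CRblk (inr m.-1) (inr s) *m (eigcoef (inr s) *: v)
    = \sum_(s < m) lam ^+ s *: (Cc s *m v).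
  by rewrite big_mkord; apply: eq_bigr => s _; rewrite /= eqxx valK -scalemxAr.
rewrite /eigcoef scalerA -exprS prednK //.
move: Rv; set V := _ *: v; set Y := \sum_(s < m) _; set X := \sum_(j < n) _ => Rv.
by apply/eqP; rewrite eq_sym -subr_eq0 opprD opprK addrA addrAC Rv.
Qed.

Lemma CR_eigenvector (p_gt0 : (0 < p)%N) :
  (0 < m)%N -> (forall j, lam != a j) -> Rmat Cc a mj B lam *m v = 0 ->
  let x := blockcol p_gt0 N (fun b => eigcoef (block_pos b) *: v) in
  CR Cc a mj B *m x = lam *: x.
Proof.
move=> m_gt0 lam_neq Rv /=.
rewrite CR_blockmx.
rewrite (@mul_blockmx_blockcol _ _ p_gt0 _ (fun r c => CRblk (block_pos r) (block_pos c))).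
rewrite blockcolZ; apply: eq_blockcol => b b_lt.
rewrite (sum_block_pos (fun y => CRblk (block_pos b) y *m (eigcoef y *: v))).
move: (block_posP b_lt).
case: (block_pos b) => [[[j k] t] /mem_Apart/andP[k_in t_lt] | s s_lt].
  exact: CR_row_A.
have [s1_lt|s1_ge] := ltnP s.+1 m; first exact: CR_row_shift.
have -> : s = m.-1 by lia.
exact: CR_row_last.
Qed.

End Eigenvector.

End BlockStructure.

Theorem theorem3p1 (R : realType) (p m n : nat)
  (Cc : 'I_m -> 'M[R[i]]_p) (a : 'I_n -> R[i]) (mj : 'I_n -> nat)
  (B : 'I_n -> nat -> 'M[R[i]]_p) :
  (1 <= p)%N -> (1 <= m)%N -> (1 <= n)%N ->
  injective a ->
  (forall j, 1 <= mj j)%N ->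
  forall lam0 : R[i], rat_eigenvalue Cc a mj B lam0 ->
  eigenvalue (CR Cc a mj B) lam0.
Proof.
move=> p_gt0 m_gt0 _ _ _ lam [lam_neq [v [v_neq0 Rv]]].
apply: eigenvalue_col (CR_eigenvector p_gt0 m_gt0 lam_neq Rv) _.
apply: contra v_neq0 => /eqP /(blockcol_eq0 (b := size (Apart mj))).
rewrite block_pos_ge // subnn /= expr0 scale1r => -> //.
by rewrite Nsize_eq; lia.
Qed.
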